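(* Let $a\in \mathcal{A}$. Then the following are equivalent: (1) $a$ has a $w$-weighted core inverse. (2) $aw\in \mathcal{A}^{\#}$ and there exists $x\in \mathcal{A}$ such that $xw(aw)^2=aw$, $(wawx)^*=wawx$. (3) $aw\in \mathcal{A}^{\#}$ and there exists $x\in \mathcal{A}$ such that $xw(aw)=aw(aw)^{\#}$, $(wawx)^*=wawx$.
   Context: $\mathcal{A}$ is a complex Banach *-algebra with identity and $w\in\mathcal{A}$. $a$ has a $w$-weighted core inverse if there is $x$ with $a(wx)^2=x$, $(wawx)^*=wawx$, $xw(aw)^2=aw$. $\mathcal{A}^{\#}$ is the set of group invertible elements, $b^{\#}$ the group inverse. *)

From HB Require Import structures.
From mathcomp Require Import all_boot all_order all_algebra.
Set Implicit Arguments. Unset Strict Implicit. Unset Printing Implicit Defensive.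
Import GRing.Theory.
Local Open Scope ring_scope.

Definition is_involution (A : nzRingType) (star : A -> A) : Prop :=
  [/\ forall x y : A, star (x + y) = star x + star y,
      forall x y : A, star (x * y) = star y * star x
    & forall x : A, star (star x) = x].

Definition group_inverse (A : nzRingType) (b y : A) : Prop :=
  [/\ b * y * b = b, y * b * y = y & b * y = y * b].

Definition group_invertible (A : nzRingType) (b : A) : Prop :=
  exists y, group_inverse b y.

Definition w_core_inverse (A : nzRingType) (star : A -> A) (w a x : A) : Prop :=
  [/\ a * (w * x) ^+ 2 = x,
      star (w * a * w * x) = w * a * w * x
    & x * w * (a * w) ^+ 2 = a * w].

Definition has_w_core_inverse (A : nzRingType) (star : A -> A) (w a : A) : Prop :=
  exists x, w_core_inverse star w a x.

(* If [b] has left and right "square divisors" [u * b^2 = b = b^2 * v], then [b] is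
   group invertible with [b^# = u^2 b].  For a weighted core inverse [x] of [a], the
   element [u = x w] is such a left divisor of [b = a w], and [x] yields the right one
   [(x w)^2 b], which gives (1) => (2).  Given [b^#], the conditions [z b^2 = b] and
   [z b = b b^#] are equivalent for every [z], which is (2) <=> (3).  Finally, from (3)
   the element [b b^# x] is a weighted core inverse of [a]; it satisfies the same
   self-adjointness condition as [x] because [w a w (b b^# x) = w a w x]. *)
From mathcomp Require Import all_boot all_order all_algebra.
Set Implicit Arguments.
Unset Strict Implicit.
Unset Printing Implicit Defensive.
Import GRing.Theory.
Local Open Scope ring_scope.

Section GroupInverse.

Variable A : nzRingType.

Lemma group_inverse_sq_factors (b u v : A) :
  u * b ^+ 2 = b -> b ^+ 2 * v = b -> group_inverse b (u ^+ 2 * b).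
Proof.
rewrite !expr2 => hu hv.
have hbv : b * v = u * b by rewrite -{1}hu -mulrA hv.
have hbub : b * u * b = b by rewrite -mulrA -hbv mulrA hv.
have hby : b * (u * u * b) = u * b.
  by rewrite !mulrA -(mulrA _ u b) -hbv mulrA hbub hbv.
have hyb : u * u * b * b = u * b by rewrite -mulrA -(mulrA u) hu.
split; rewrite ?hby ?hyb //.
- by rewrite -mulrA hu.
- by rewrite -mulrA hby !mulrA.
Qed.

Variables b y : A.
Hypothesis hy : group_inverse b y.

Lemma group_inverse_sqK : b ^+ 2 * y = b.
Proof. by case: hy => hbyb _ hc; rewrite expr2 -mulrA hc mulrA. Qed.

Lemma group_inverse_mulr_sq (z : A) : z * b ^+ 2 = b <-> z * b = b * y.
Proof.
case: hy => hbyb _ _; split => hz.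
- by rewrite -{1}group_inverse_sqK mulrA hz.
- by rewrite expr2 mulrA hz.
Qed.

End GroupInverse.

Section WeightedCoreInverse.

Variables (A : nzRingType) (star : A -> A) (w a : A).

Lemma w_core_inverse_group_invertible (x : A) :
  w_core_inverse star w a x -> group_invertible (a * w).
Proof.
case=> hx _ hxb; set b := a * w in hxb *.
have hbz : b * (x * w) ^+ 2 = x * w by rewrite -[in RHS]hx /b !expr2 !mulrA.
have hbzb : b * (x * w) * b = b.
  transitivity (b * (x * w) ^+ 2 * b ^+ 2); last by rewrite hbz.
  by rewrite -{2}hxb !expr2 !mulrA.
have hv : b ^+ 2 * ((x * w) ^+ 2 * b) = b.
  transitivity (b * (b * (x * w) ^+ 2) * b); first by rewrite !expr2 !mulrA.
  by rewrite hbz hbzb.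
by exists ((x * w) ^+ 2 * b); apply: group_inverse_sq_factors hxb hv.
Qed.

Lemma w_core_inverse_of_group_inverse (y x : A) :
    group_inverse (a * w) y -> x * w * (a * w) = a * w * y ->
    star (w * a * w * x) = w * a * w * x ->
  w_core_inverse star w a (a * w * y * x).
Proof.
move=> hy hxb hs; have hb2y := group_inverse_sqK hy; case: hy => hbyb _ _.
set b := a * w in hxb hb2y hbyb *.
have hwaw : w * a * w * (b * y * x) = w * a * w * x.
  transitivity (w * (b ^+ 2 * y) * x); first by rewrite /b !expr2 !mulrA.
  by rewrite hb2y /b !mulrA.
split; last first.
- transitivity (b * y * (x * w * b) * b); first by rewrite !expr2 !mulrA.
  by rewrite hxb mulrA !hbyb.
- by rewrite hwaw.
- transitivity (b * b * y * (x * w * b) * y * x); first by rewrite /b !expr2 !mulrA.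
  rewrite hxb.
  transitivity (b * (b * y * b) * y * y * x); first by rewrite !mulrA.
  by rewrite hbyb -expr2 hb2y.
Qed.

End WeightedCoreInverse.

Theorem corollary2p5 (A : nzRingType) (star : A -> A)
    (hstar : is_involution star) (w a : A) :
  [/\ (has_w_core_inverse star w a <->
        (group_invertible (a * w) /\
         exists x, x * w * (a * w) ^+ 2 = a * w /\
                   star (w * a * w * x) = w * a * w * x)),
      (group_invertible (a * w) /\
         exists x, x * w * (a * w) ^+ 2 = a * w /\
                   star (w * a * w * x) = w * a * w * x) <->
      (exists y, group_inverse (a * w) y /\
         exists x, x * w * (a * w) = a * w * y /\
                   star (w * a * w * x) = w * a * w * x)
    & (exists y, group_inverse (a * w) y /\
         exists x, x * w * (a * w) = a * w * y /\
                   star (w * a * w * x) = w * a * w * x) <->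
      has_w_core_inverse star w a].
Proof.
set P1 := has_w_core_inverse _ _ _.
set P2 := (group_invertible _ /\ _).
set P3 := (exists y, _).
have h12 : P1 -> P2.
  case=> x hx; split; first exact: w_core_inverse_group_invertible hx.
  by exists x; case: hx.
have h23 : P2 <-> P3.
  split.
  - case=> [[y hy] [x [hx hs]]]; exists y; split => //.
    by exists x; split => //; apply/(group_inverse_mulr_sq hy).
  - case=> y [hy [x [hx hs]]]; split; first by exists y.
    by exists x; split => //; apply/(group_inverse_mulr_sq hy).
have h31 : P3 -> P1.
  case=> y [hy [x [hx hs]]]; exists (a * w * y * x).
  exact: w_core_inverse_of_group_inverse.
by split; [split=> [/h12 | /h23/h31] | split=> [/h23 | /h31/h12] | split=> [/h31 | /h12/h23]].
Qed.
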